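(* Let $p$ be a prime and $r$ a positive integer. Then $p\in F_r$ if and only if $r<p<(p_{b(r)+1}-r)(p_{b(r)+2}-r)+r$.
   Context: $p_i$ denotes the $i$-th prime. For a positive integer $r$, $S_r$ is the multiplicative arithmetic function with $S_r(q^{\alpha})=0$ if $q\leq r$ and $S_r(q^{\alpha})=q^{\alpha-1}(q-r)$ if $q>r$, for all primes $q$ and positive integers $\alpha$. $B_r=\{n\in\mathbb{N}: S_r(n)>0\}$ (positive integers whose smallest prime factor exceeds $r$, together with $1$). $F_r$ is the set of $n\in B_r$ such that $S_r(n)<S_r(m)$ for all $m\in B_r$ with $m>n$. $b(1)=0$, and for $r\geq 2$, $b(r)$ is the largest integer with $p_{b(r)}\leq r$. *)

From mathcomp Require Import all_boot.
Set Implicit Arguments. Unset Strict Implicit. Unset Printing Implicit Defensive.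

(* S_r(n) = prod over prime powers q^a || n of q^(a-1) (q - r); with truncated
   nat subtraction, q - r = 0 exactly when q <= r, matching S_r(q^a) = 0 there. *)
Definition Sr (r n : nat) : nat :=
  \prod_(q <- primes n) (q ^ (logn q n).-1 * (q - r)).

Definition inB (r n : nat) : Prop := 0 < n /\ 0 < Sr r n.

Definition inF (r n : nat) : Prop :=
  inB r n /\ forall m, inB r m -> n < m -> Sr r n < Sr r m.

Lemma next_prime_ex n : exists p, (n < p) && prime p.
Proof. case: (prime_above n) => p h1 h2; exists p; by rewrite h1 h2. Qed.

Definition next_prime (n : nat) : nat := ex_minn (next_prime_ex n).

(* p_i, the i-th prime (1-indexed: pr 1 = 2, pr 2 = 3, ...); pr 0 = 1 is a dummy *)
Definition pr (i : nat) : nat := iter i next_prime 1.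

(* b(r): largest i with p_i <= r (b(1) = 0; the index 0 is always admissible as pr 0 = 1) *)
Definition b (r : nat) : nat := \max_(i < r.+1 | pr i <= r) i.

From mathcomp Require Import all_boot zify.
Set Implicit Arguments. Unset Strict Implicit. Unset Printing Implicit Defensive.

(* Let q1 < q2 be the two smallest primes above r, so that S_r(p) = p - r for every prime
   p > r.  An element m of B_r that is neither 1 nor prime has S_r(m) >= (q1 - r)(q2 - r):
   either m has two distinct prime factors, both larger than r, or m = q^k with k >= 2 and
   S_r(m) >= q1 (q1 - r) >= (q2 - r)(q1 - r), as q2 <= q1 + r.  Hence a prime p with
   r < p < (q1 - r)(q2 - r) + r lies in F_r.  Above that bound, m = q1 q2 or m = q1 t, with t
   a prime in (p/q1, 2p/q1], is larger than p and has S_r(m) <= S_r(p).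
   The prime gaps used (q1 <= 2r, q2 <= q1 + r, Bertrand's postulate) come from Erdos's proof:
   the primes in (n, 2n] have product larger than 2n once n >= 4^7, so there are two of them,
   and an explicit ladder of primes covers 6 <= n < 4^7. *)

(** * Central binomial coefficients and the primorial *)

Lemma bin_double_succ n : 'C((2 * n).+2, n.+1) = 2 * 'C((2 * n).+1, n.+1).
Proof.
rewrite binS -[X in _ + X = _](@bin_sub (2 * n).+1 n); last lia.
rewrite (_ : (2 * n).+1 - n = n.+1); lia.
Qed.

Lemma central_bin_rec n : n.+1 * 'C(2 * n.+1, n.+1) = 2 * (2 * n).+1 * 'C(2 * n, n).
Proof.
rewrite (_ : 2 * n.+1 = (2 * n).+2); last lia.
have := mul_bin_diag (2 * n).+1 n; rewrite /= => diag.
by rewrite bin_double_succ mulnCA -diag mulnA.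
Qed.

Lemma central_bin_lower n : 4 ^ n <= (2 * n).+1 * 'C(2 * n, n).
Proof.
elim: n => [|n IH]; first by rewrite bin0.
rewrite -(leq_pmul2l (ltn0Sn n)) expnS [in X in _ <= X]mulnCA central_bin_rec; nia.
Qed.

Lemma central_bin_upper n : 0 < n -> 2 * 'C(2 * n, n) <= 4 ^ n.
Proof.
case: n => // n _; elim: n => [|n IH] //.
have := central_bin_rec n.+1.
rewrite expnS -(leq_pmul2l (ltn0Sn n.+1)); nia.
Qed.

Lemma bin_odd_mid_le k : 'C((2 * k).+1, k.+1) <= 4 ^ k.
Proof.
have := central_bin_upper (ltn0Sn k).
by rewrite (_ : 2 * k.+1 = (2 * k).+2) ?bin_double_succ ?expnS; lia.
Qed.

Lemma prime_dvd_fact p n : prime p -> (p %| n`!) = (p <= n).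
Proof.
move=> p_pr; apply/idP/idP => [|le_pn]; last by rewrite dvdn_fact ?prime_gt0.
elim: n => [|n IH]; first by rewrite dvdn1 => /eqP p1; rewrite p1 in p_pr.
rewrite factS Euclid_dvdM // => /orP[/dvdn_leq -> // | /IH]; exact: leqW.
Qed.

Lemma prod_uniq_primes_dvdn (s : seq nat) N :
  uniq s -> all prime s -> all (dvdn^~ N) s -> \prod_(p <- s) p %| N.
Proof.
elim: s => [|p s IH] /=; first by rewrite big_nil dvd1n.
move=> /andP[p_notin_s s_uniq] /andP[p_pr s_pr] /andP[p_dvd s_dvd].
rewrite big_cons Gauss_dvd ?p_dvd ?IH // prime_coprime //.
rewrite Euclid_dvd_prod // big_has; apply/hasPn => q q_in_s /=.
rewrite dvdn_prime2 //; last exact: (allP s_pr).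
by apply: contraNN p_notin_s => /eqP ->.
Qed.

Definition primorial m := \prod_(0 <= p < m.+1 | prime p) p.

Lemma primes_mid_dvd_bin k :
  \prod_(k.+2 <= p < (2 * k).+2 | prime p) p %| 'C((2 * k).+1, k.+1).
Proof.
rewrite -big_filter; apply: prod_uniq_primes_dvdn.
- by rewrite filter_uniq // iota_uniq.
- by apply/allP => p; rewrite mem_filter => /andP[].
apply/allP => p; rewrite mem_filter mem_index_iota => /and3P[p_pr lo hi].
have fact_eq := @bin_fact (2 * k).+1 k.+1 ltac:(lia).
rewrite (_ : (2 * k).+1 - k.+1 = k) in fact_eq; last lia.
have : p %| ((2 * k).+1)`! by rewrite prime_dvd_fact.
by rewrite -fact_eq Euclid_dvdM // Euclid_dvdM // !prime_dvd_fact // => /or3P[// | |]; lia.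
Qed.

Lemma primorial_odd k : primorial (2 * k).+1 <= primorial k.+1 * 4 ^ k.
Proof.
rewrite /primorial (@big_cat_nat _ _ _ k.+2) //=; last lia.
rewrite leq_mul2l; apply/orP; right; apply: leq_trans (bin_odd_mid_le k).
by apply: dvdn_leq; [rewrite bin_gt0; lia | exact: primes_mid_dvd_bin].
Qed.

Lemma primorial_even k : 1 < k -> primorial (2 * k) = primorial (2 * k).-1.
Proof.
move=> k_gt1; rewrite /primorial prednK; last lia.
rewrite big_mkcond big_nat_recr //= -big_mkcond /=.
have /negbTE -> : ~~ prime (2 * k) by apply/negP => /even_prime [|]; lia.
by rewrite muln1.
Qed.

Lemma primorial_le m : primorial m <= 4 ^ m.
Proof.
elim/ltn_ind: m => m IH.
have [m_le2|m_gt2] := leqP m 2.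
  by case: m m_le2 {IH} => [|[|[|]]] //; rewrite /primorial unlock.
have [[k m_odd]|[k m_even]] : (exists k, m = (2 * k).+1) \/ (exists k, m = 2 * k).
  by case: (boolP (m %% 2 == 1)) => m_mod2; [left | right]; exists (m %/ 2); lia.
- rewrite m_odd; apply: leq_trans (primorial_odd k) _.
  rewrite (_ : (2 * k).+1 = k.+1 + k); last lia.
  by rewrite expnD leq_mul2r IH ?orbT //; lia.
- rewrite m_even primorial_even; last lia.
  by apply: leq_trans (IH _ _) _; rewrite ?leq_pexp2l //; lia.
Qed.

(** * Prime factors of the central binomial coefficient *)

Definition floor_excess n d := (2 * n) %/ d - 2 * (n %/ d).

Lemma divn_double n d : 0 < d -> (2 * n) %/ d = 2 * (n %/ d) + (2 * (n %% d)) %/ d.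
Proof. by move=> d_gt0; rewrite {1}(divn_eq n d) mulnDr mulnA divnMDl. Qed.

Lemma floor_excessE n d : 0 < d -> floor_excess n d = (2 * (n %% d)) %/ d.
Proof. by move=> d_gt0; rewrite /floor_excess divn_double // addKn. Qed.

Lemma floor_excess_le1 n d : 0 < d -> floor_excess n d <= 1.
Proof.
move=> d_gt0; rewrite floor_excessE // -ltnS ltn_divLR //.
by have := ltn_pmod n d_gt0; lia.
Qed.

Lemma floor_excess_eq0 n d : 2 * n < d -> floor_excess n d = 0.
Proof. by move=> lt_2n_d; rewrite /floor_excess !divn_small //; lia. Qed.

Lemma logn_central_bin p n : prime p ->
  logn p 'C(2 * n, n) = \sum_(1 <= k < (2 * n).+1) floor_excess n (p ^ k).
Proof.
move=> p_pr; have p_gt1 := prime_gt1 p_pr.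
have fact_eq := @bin_fact (2 * n) n ltac:(lia).
rewrite (_ : 2 * n - n = n) in fact_eq; last lia.
have : logn p ('C(2 * n, n) * (n`! * n`!)) = logn p (2 * n)`! by rewrite fact_eq.
rewrite !lognM ?bin_gt0 ?muln_gt0 ?fact_gt0 //; last lia.
rewrite !logn_fact //.
have -> : \sum_(1 <= k < n.+1) n %/ p ^ k = \sum_(1 <= k < (2 * n).+1) n %/ p ^ k.
  rewrite [RHS](@big_cat_nat _ _ _ n.+1) //=; last lia.
  rewrite [X in _ = _ + X]big1_seq ?addn0 // => k /andP[_].
  rewrite mem_index_iota => k_range.
  by apply: divn_small; apply: leq_trans (ltn_expl k p_gt1); lia.
have -> : \sum_(1 <= k < (2 * n).+1) (2 * n) %/ p ^ k =
          \sum_(1 <= k < (2 * n).+1) floor_excess n (p ^ k) +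
          2 * \sum_(1 <= k < (2 * n).+1) n %/ p ^ k.
  rewrite big_distrr -big_split /=; apply: eq_bigr => k _.
  by rewrite /floor_excess subnK // divn_double ?leq_addr // expn_gt0 prime_gt0.
lia.
Qed.

Lemma logn_central_bin_le p n : prime p -> 0 < n ->
  logn p 'C(2 * n, n) <= trunc_log p (2 * n).
Proof.
move=> p_pr n_gt0; have p_gt1 := prime_gt1 p_pr.
set L := trunc_log p (2 * n).
have L_lt : L < p ^ L := ltn_expl L p_gt1.
have pL_le : p ^ L <= 2 * n by apply: trunc_logP; lia.
rewrite logn_central_bin // (@big_cat_nat _ _ _ L.+1) //=; last lia.
rewrite [X in _ + X]big1_seq ?addn0; last first.
  move=> k /andP[_]; rewrite mem_index_iota => /andP[lt_Lk _].
  apply: floor_excess_eq0; apply: leq_trans (trunc_log_ltn (2 * n) p_gt1) _.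
  by rewrite leq_pexp2l ?prime_gt0.
apply: (@leq_trans (\sum_(1 <= k < L.+1) 1)).
  by apply: leq_sum => k _; rewrite floor_excess_le1 // expn_gt0 prime_gt0.
by rewrite sum_nat_const_nat; lia.
Qed.

Lemma pfactor_central_bin_le p n : prime p -> 0 < n -> p ^ logn p 'C(2 * n, n) <= 2 * n.
Proof.
move=> p_pr n_gt0; have p_gt1 := prime_gt1 p_pr.
apply: leq_trans (trunc_logP p_gt1 _); last lia.
by rewrite leq_pexp2l ?prime_gt0 ?logn_central_bin_le.
Qed.

Lemma logn_central_bin_le1 p n : prime p -> 0 < n -> 2 * n < p * p ->
  logn p 'C(2 * n, n) <= 1.
Proof.
move=> p_pr n_gt0 lt_2n_pp; have p_gt1 := prime_gt1 p_pr.
apply: leq_trans (logn_central_bin_le p_pr n_gt0) _.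
rewrite -ltnS -(ltn_exp2l _ _ p_gt1).
by apply: leq_ltn_trans (trunc_logP p_gt1 _) _; rewrite ?expnS ?expn1; lia.
Qed.

Lemma logn_central_bin_eq0 p n : prime p -> p <= n -> 2 * n < 3 * p -> 2 * n < p * p ->
  logn p 'C(2 * n, n) = 0.
Proof.
move=> p_pr le_pn lt_2n_3p lt_2n_pp; have p_gt1 := prime_gt1 p_pr.
rewrite logn_central_bin // big1_seq // => k /andP[_]; rewrite mem_index_iota.
case: k => [|[|k]] k_range; first lia.
  rewrite expn1 floor_excessE; last lia.
  rewrite -[in n %% p](subnK le_pn) modnDr modn_small; last lia.
  by rewrite divn_small; lia.
apply: floor_excess_eq0; apply: leq_trans lt_2n_pp _.
by rewrite -[p * p]/(p ^ 2) leq_pexp2l; lia.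
Qed.

Lemma prod_pfactor_eq m N : 0 < m -> {in primes m, forall p, p <= N} ->
  \prod_(0 <= p < N.+1) p ^ logn p m = m.
Proof.
move=> m_gt0 primes_le.
rewrite -[RHS](partnT m_gt0) (@widen_partn (maxn m N)) ?leq_maxl //.
rewrite [RHS](@big_cat_nat _ _ _ N.+1) //=; last lia.
rewrite [X in _ = _ * X]big1_seq ?muln1; last first.
  move=> p /andP[_]; rewrite mem_index_iota => /andP[lt_Np _].
  suff -> : logn p m = 0 by [].
  by apply/eqP; rewrite -leqn0 leqNgt logn_gt0; apply/negP => /primes_le; lia.
by apply: eq_bigl.
Qed.

Lemma central_bin_prod_pfactor n : 0 < n ->
  \prod_(0 <= p < (2 * n).+1) p ^ logn p 'C(2 * n, n) = 'C(2 * n, n).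
Proof.
move=> n_gt0; apply: prod_pfactor_eq; first by rewrite bin_gt0; lia.
move=> p p_in; have p_pr : prime p by move: p_in; rewrite mem_primes => /andP[].
apply: leq_trans (pfactor_central_bin_le p_pr n_gt0).
by rewrite -{1}(expn1 p) leq_exp2l ?prime_gt1 // logn_gt0.
Qed.

(** * Two primes between n and 2n *)

Definition prod_primes_between n := \prod_(0 <= p < (2 * n).+1 | prime p && (n < p)) p.

Section CentralBinomialBound.

Variables n K : nat.
Hypotheses (n_gt0 : 0 < n) (lt_2n_KK : 2 * n < K * K).

(* p ^ logn p 'C(2n, n) is at most 2n, is 1 when 2n/3 < p <= n, and is at most p when p >= K. *)
Let small_part p := if p < K then 2 * n else 1.
Let medium_part p := if prime p && (3 * p <= 2 * n) then p else 1.
Let large_part p := if prime p && (n < p) then p else 1.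

Lemma pfactor_central_bin_le_parts p :
  p ^ logn p 'C(2 * n, n) <= small_part p * medium_part p * large_part p.
Proof.
have small_gt0 : 0 < small_part p by rewrite /small_part; case: ifP; lia.
have medium_gt0 : 0 < medium_part p.
  by rewrite /medium_part; case: ifP => // /andP[/prime_gt0].
have large_gt0 : 0 < large_part p.
  by rewrite /large_part; case: ifP => // /andP[/prime_gt0].
have [p_pr|p_npr] := boolP (prime p); last first.
  by rewrite /logn (negbTE p_npr) expn0 !muln_gt0 small_gt0 medium_gt0 large_gt0.
have pf_le := pfactor_central_bin_le p_pr n_gt0.
have [lt_pK|le_Kp] := ltnP p K.
  rewrite /small_part lt_pK -mulnA; apply: leq_trans pf_le _.
  by rewrite leq_pmulr // muln_gt0 medium_gt0 large_gt0.
have lt_2n_pp : 2 * n < p * p by apply: leq_trans lt_2n_KK (leq_mul le_Kp le_Kp).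
case v_eq: (logn p _) (logn_central_bin_le1 p_pr n_gt0 lt_2n_pp) pf_le => [|[|//]] _ pf_le.
  by rewrite expn0 !muln_gt0 small_gt0 medium_gt0 large_gt0.
rewrite expn1.
have [le_3p_2n|lt_2n_3p] := leqP (3 * p) (2 * n).
  rewrite /medium_part p_pr le_3p_2n -mulnA mulnCA.
  by rewrite leq_pmulr // muln_gt0 small_gt0 large_gt0.
have [lt_np|le_pn] := ltnP n p.
  by rewrite /large_part p_pr lt_np leq_pmull // muln_gt0 small_gt0 medium_gt0.
by rewrite logn_central_bin_eq0 in v_eq.
Qed.

Lemma prod_small_part : \prod_(0 <= p < (2 * n).+1) small_part p <= (2 * n) ^ K.
Proof.
have small_gt0 p : 0 < small_part p by rewrite /small_part; case: ifP; lia.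
apply: (@leq_trans (\prod_(0 <= p < (2 * n).+1 + K) small_part p)).
  rewrite [X in _ <= X](@big_cat_nat _ _ _ (2 * n).+1) //=; last lia.
  by rewrite leq_pmulr // prodn_gt0.
rewrite (@big_cat_nat _ _ _ K) //=; last lia.
rewrite [X in _ * X]big1_seq ?muln1; last first.
  by move=> p /andP[_]; rewrite mem_index_iota /small_part => /andP[le_Kp _]; rewrite ltnNge le_Kp.
rewrite (@eq_big_nat _ _ _ 0 K _ (fun _ => 2 * n)); last first.
  by move=> p /andP[_ lt_pK]; rewrite /small_part lt_pK.
by rewrite prod_nat_const_nat subn0.
Qed.

Lemma prod_medium_part :
  \prod_(0 <= p < (2 * n).+1) medium_part p = primorial ((2 * n) %/ 3).
Proof.
rewrite /primorial [RHS]big_mkcond [LHS](@big_cat_nat _ _ _ ((2 * n) %/ 3).+1) //=; last lia.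
rewrite [X in _ * X]big1_seq ?muln1; last first.
  move=> p /andP[_]; rewrite mem_index_iota /medium_part => range_p.
  by case: ifP => // /andP[_]; lia.
apply: eq_big_nat => p range_p; rewrite /medium_part.
by case: (prime p) => //=; rewrite (_ : 3 * p <= 2 * n) //; lia.
Qed.

Lemma central_bin_le_prod :
  'C(2 * n, n) <= (2 * n) ^ K * primorial ((2 * n) %/ 3) * prod_primes_between n.
Proof.
rewrite -central_bin_prod_pfactor //.
apply: leq_trans (leq_prod (fun p _ => pfactor_central_bin_le_parts p)) _.
have -> : prod_primes_between n = \prod_(0 <= p < (2 * n).+1) large_part p.
  by rewrite /prod_primes_between big_mkcond.
by rewrite !big_split /= -prod_medium_part !leq_mul ?prod_small_part.
Qed.

End CentralBinomialBound.

Lemma prod_primes_between_le n K e : 0 < n -> 2 * n < K * K -> (2 * n).+1 <= 4 ^ e ->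
  prod_primes_between n <= 2 * n -> n <= 3 * (e * (K + 2)).
Proof.
move=> n_gt0 lt_2n_KK le_2n_4e small_prod.
suff : 4 ^ n <= 4 ^ (e * (K + 2) + (2 * n) %/ 3) by rewrite leq_exp2l //; lia.
apply: leq_trans (central_bin_lower n) _.
apply: leq_trans (leq_mul (leqnn _) (central_bin_le_prod n_gt0 lt_2n_KK)) _.
apply: (@leq_trans (4 ^ e * ((4 ^ e) ^ K * 4 ^ ((2 * n) %/ 3) * 4 ^ e))).
  apply: leq_mul => //; apply: leq_mul; last lia.
  by apply: leq_mul; [rewrite leq_exp2r; lia | exact: primorial_le].
by rewrite -expnM -!expnD leq_exp2l //; nia.
Qed.

Lemma log_mul_pow2_lt_sqr j : 7 <= j -> (j + 2) * (12 * 2 ^ j + 6) < 2 ^ j * 2 ^ j.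
Proof.
move=> j_ge7; have [i ->] : exists i, j = i + 7 by exists (j - 7); lia.
elim: i => [|i IH] //; rewrite (_ : i.+1 + 7 = (i + 7).+1) // expnS.
by move: IH; set X := 2 ^ (i + 7); nia.
Qed.

Lemma prod_primes_between_gt n : 4 ^ 7 <= n -> 2 * n < prod_primes_between n.
Proof.
move=> n_large; have n_gt0 : 0 < n by apply: leq_trans n_large.
set j := trunc_log 4 n; set X := 2 ^ j.
have sqrX : 4 ^ j = X * X by rewrite /X -expnMn.
have lo : X * X <= n by rewrite -sqrX trunc_logP.
have hi : n < 4 * (X * X) by rewrite -sqrX -expnS trunc_log_ltn.
have j_ge7 : 7 <= j.
  rewrite -ltnS -(ltn_exp2l _ _ (isT : 1 < 4)).
  by apply: leq_ltn_trans n_large _; rewrite expnS sqrX.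
have lt_2n_KK : 2 * n < (4 * X) * (4 * X) by nia.
have le_2n_4e : (2 * n).+1 <= 4 ^ (j + 2) by rewrite expnD sqrX; lia.
rewrite ltnNge; apply/negP => /(prod_primes_between_le n_gt0 lt_2n_KK le_2n_4e).
by have := log_mul_pow2_lt_sqr j_ge7; rewrite -/X; nia.
Qed.

Definition two_primes_between n :=
  exists t1 t2, [/\ prime t1, prime t2, n < t1, t1 < t2 & t2 <= 2 * n].

Lemma two_primes_between_of_prod n : 0 < n -> 2 * n < prod_primes_between n ->
  two_primes_between n.
Proof.
move=> n_gt0; rewrite /prod_primes_between -big_filter.
set s := [seq p <- _ | _].
have s_sorted : sorted ltn s.
  by apply: sorted_filter; [exact: ltn_trans | exact: iota_ltn_sorted].
have s_mem x : x \in s -> [/\ prime x, n < x & x <= 2 * n].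
  by rewrite mem_filter mem_index_iota => /andP[/andP[? ?] /andP[_ ?]]; split.
case: s s_sorted s_mem => [|t1 [|t2 s]] s_sorted s_mem.
- by rewrite big_nil; lia.
- by rewrite big_seq1; have [_ _] := s_mem t1 (mem_head _ _); lia.
move=> _; have [t1_pr lt_nt1 _] := s_mem t1 (mem_head _ _).
have [t2_pr _ le_t2] : [/\ prime t2, n < t2 & t2 <= 2 * n].
  by apply: s_mem; rewrite inE mem_head orbT.
by exists t1, t2; split => //; case/andP: s_sorted.
Qed.

(* If a, b, c are consecutive entries of a prime ladder and a <= n < b, then the primes b < c
   lie in (n, 2n]. *)
Fixpoint prime_ladder (s : seq nat) : bool :=
  match s with
  | a :: ((b :: c :: _) as s') => [&& prime b, prime c, b < c, c <= 2 * a & prime_ladder s']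
  | _ => true
  end.

Fixpoint ladder_top (s : seq nat) : nat :=
  match s with
  | _ :: ((_ :: _ :: _) as s') => ladder_top s'
  | [:: a; _] => a
  | _ => 0
  end.

Lemma prime_ladder_two_primes s n :
  prime_ladder s -> head 0 s <= n < ladder_top s -> two_primes_between n.
Proof.
elim: s n => [|a [|b [|c s]] IH] n //=; try lia.
move=> /and5P[b_pr c_pr lt_bc le_c2a ladder] /andP[le_an lt_n_top].
have [lt_nb|le_bn] := ltnP n b; first by exists b, c; split => //; lia.
by apply: IH => //=; rewrite le_bn.
Qed.

Definition small_ladder := [:: 6; 7; 11; 13; 19; 23; 37; 43; 73; 83; 139; 163; 277; 317;
  547; 631; 1093; 1259; 2179; 2503; 4357; 5003; 8713; 9973; 17419; 19937].

Lemma two_primes_between_ge6 n : 6 <= n -> two_primes_between n.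
Proof.
move=> n_ge6; have [n_small|n_large] := ltnP n (4 ^ 7).
  apply: (@prime_ladder_two_primes small_ladder); first by vm_compute.
  by rewrite n_ge6 (leq_trans n_small).
by apply: two_primes_between_of_prod; [lia | exact: prod_primes_between_gt].
Qed.

Lemma bertrand n : 0 < n -> exists2 t, prime t & n < t <= 2 * n.
Proof.
move=> n_gt0; have [n_ge6|n_lt6] := leqP 6 n.
  have [t1 [t2 [t1_pr _ lt_nt1 lt_t12 le_t2]]] := two_primes_between_ge6 n_ge6.
  by exists t1 => //; lia.
by case: n n_gt0 n_lt6 => [|[|[|[|[|[|]]]]]] // _ _;
  [exists 2 | exists 3 | exists 5 | exists 5 | exists 7].
Qed.

(** * The primes above r and the function S_r *)

Lemma next_primeP n : [/\ prime (next_prime n), n < next_prime n &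
  forall t, prime t -> n < t -> next_prime n <= t].
Proof.
rewrite /next_prime; case: ex_minnP => m /andP[lt_nm m_pr] m_min.
by split => // t t_pr lt_nt; apply: m_min; rewrite lt_nt t_pr.
Qed.

Lemma lt_pr i : i < pr i.
Proof. by elim: i => [|i IH] //=; have [_ lt_next _] := next_primeP (pr i); lia. Qed.

Lemma pr_b_le r : 0 < r -> pr (b r) <= r.
Proof.
move=> r_gt0; apply: (big_ind (fun i => pr i <= r)) => // i j.
by rewrite /maxn; case: ifP.
Qed.

Lemma lt_pr_b_succ r : r < pr (b r).+1.
Proof.
rewrite ltnNge; apply/negP => le_pr_r.
have lt_br : (b r).+1 < r.+1 by have := lt_pr (b r).+1; lia.
have := @leq_bigmax_cond _ (fun i : 'I_r.+1 => pr i <= r) val (Ordinal lt_br) le_pr_r.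
by rewrite -/(b r) /=; lia.
Qed.

Lemma pr_b_succP r : 0 < r -> [/\ prime (pr (b r).+1), r < pr (b r).+1 &
  forall t, prime t -> r < t -> pr (b r).+1 <= t].
Proof.
move=> r_gt0; have [q_pr _ q_min] := next_primeP (pr (b r)).
split => // [|t t_pr lt_rt]; first exact: lt_pr_b_succ.
by apply: q_min => //; have := pr_b_le r_gt0; lia.
Qed.

Lemma prime_gap_small r q : 0 < r -> r < 6 -> prime q -> r < q ->
  (forall t, prime t -> r < t -> q <= t) -> exists2 t, prime t & q < t <= q + r.
Proof.
move=> r_gt0 r_lt6 q_pr lt_rq q_min.
have := q_min 7 isT; have := q_min 5 isT; have := q_min 3 isT; have := q_min 2 isT.
case: q q_pr lt_rq {q_min} => [|[|[|[|[|[|[|[|q]]]]]]]] // _ lt_rq q2 q3 q5 q7; try lia.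
- by exists 3 => //; lia.
- by exists 5 => //; lia.
- by exists 7 => //; lia.
- by exists 11 => //; lia.
Qed.

Lemma Sr_prime_power r q a : prime q -> Sr r (q ^ a.+1) = q ^ a * (q - r).
Proof. by move=> q_pr; rewrite /Sr primesX // primes_prime // big_seq1 pfactorK. Qed.

Lemma Sr_prime r q : prime q -> Sr r q = q - r.
Proof. by move=> q_pr; rewrite -[in Sr r q](expn1 q) Sr_prime_power // mul1n. Qed.

Lemma Sr_mul_primes r q t : prime q -> prime t -> q != t ->
  Sr r (q * t) = (q - r) * (t - r).
Proof.
move=> q_pr t_pr neq_qt; have [q_gt0 t_gt0] := (prime_gt0 q_pr, prime_gt0 t_pr).
rewrite /Sr (perm_big [:: q; t]); last first.
  apply: uniq_perm; rewrite ?primes_uniq /= ?inE ?neq_qt // => x.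
  by rewrite primesM // !primes_prime // !inE.
rewrite big_cons big_seq1 !lognM // !logn_prime // !eqxx (negbTE neq_qt) eq_sym.
by rewrite (negbTE neq_qt) /= !expn0 !mul1n.
Qed.

Lemma Sr_gt0_prime_gt r m q : 0 < Sr r m -> q \in primes m -> r < q.
Proof.
move=> Sr_gt0 q_in; move: Sr_gt0; rewrite /Sr (bigD1_seq q) ?primes_uniq //=.
by rewrite !muln_gt0 => /andP[/andP[_ ?] _]; lia.
Qed.

Lemma Sr_ge_two_primes r m q q' : 0 < Sr r m -> q \in primes m -> q' \in primes m ->
  q != q' -> (q - r) * (q' - r) <= Sr r m.
Proof.
move=> Sr_gt0 q_in q'_in neq_qq'.
have factor_ge x : x \in primes m -> x - r <= x ^ (logn x m).-1 * (x - r).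
  by rewrite mem_primes => /andP[/prime_gt0 x_gt0 _]; rewrite leq_pmull // expn_gt0 x_gt0.
move: Sr_gt0; rewrite /Sr (bigD1_seq q) ?primes_uniq //= -big_filter.
rewrite (bigD1_seq q') ?filter_uniq ?primes_uniq ?mem_filter ?q'_in 1?eq_sym ?neq_qq' //=.
rewrite !muln_gt0 => /andP[_ /andP[_ rest_gt0]].
rewrite mulnA; apply: leq_trans (leq_pmulr _ rest_gt0).
exact: leq_mul (factor_ge q q_in) (factor_ge q' q'_in).
Qed.

Lemma prime_power_of_primes m q : 0 < m -> primes m = [:: q] -> m = q ^ logn q m.
Proof.
by move=> m_gt0 primes_m; rewrite {1}(prod_prime_decomp m_gt0) prime_decompE primes_m big_seq1.
Qed.

Lemma mul_sub_le_sub r q x t : 0 < r -> r < q -> q <= 2 * r -> r <= x -> t <= 2 * x ->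
  (q - r) * (t - r) <= x * q - r.
Proof. by move=> *; nia. Qed.

Section PrimesInF.

Variables r q1 q2 : nat.
Hypotheses (r_gt0 : 0 < r) (q1_pr : prime q1) (lt_r_q1 : r < q1)
  (q1_min : forall t, prime t -> r < t -> q1 <= t).
Hypotheses (q2_pr : prime q2) (lt_q1_q2 : q1 < q2)
  (q2_min : forall t, prime t -> q1 < t -> q2 <= t).

Lemma q1_le_double : q1 <= 2 * r.
Proof.
have [t t_pr /andP[lt_rt le_t]] := bertrand r_gt0.
by have := q1_min t_pr lt_rt; lia.
Qed.

Lemma q2_le_q1_add : q2 <= q1 + r.
Proof.
have [r_ge6|r_lt6] := leqP 6 r.
  have [t1 [t2 [t1_pr t2_pr lt_rt1 lt_t12 le_t2]]] := two_primes_between_ge6 r_ge6.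
  have := q1_min t1_pr lt_rt1; have := q2_min t2_pr; lia.
have [t t_pr /andP[lt_q1t le_t]] := prime_gap_small r_gt0 r_lt6 q1_pr lt_r_q1 q1_min.
by have := q2_min t_pr lt_q1t; lia.
Qed.

Lemma Sr_prime_power_ge q a : prime q -> r < q -> (q1 - r) * (q2 - r) <= Sr r (q ^ a.+2).
Proof.
move=> q_pr lt_rq; have le_q1q := q1_min q_pr lt_rq.
rewrite Sr_prime_power // mulnC; apply: leq_mul; last lia.
have : q <= q ^ a.+1 by rewrite -{1}(expn1 q) leq_exp2l ?prime_gt1.
by have := q2_le_q1_add; lia.
Qed.

Lemma Sr_ge_bound m : inB r m -> 1 < m -> ~~ prime m -> (q1 - r) * (q2 - r) <= Sr r m.
Proof.
move=> [m_gt0 Sr_gt0] m_gt1 m_npr.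
have primes_gt_r q : q \in primes m -> r < q := Sr_gt0_prime_gt Sr_gt0.
have primes_pr q : q \in primes m -> prime q by rewrite mem_primes => /andP[].
case primes_m: (primes m) (sorted_primes m) => [|q [|q' s]] sorted_m.
- by move/eqP: primes_m; rewrite primes_eq0; lia.
- have q_in : q \in primes m by rewrite primes_m mem_head.
  move: m_gt1 m_npr; rewrite (prime_power_of_primes m_gt0 primes_m).
  case: (logn q m) => [|[|a]] m_gt1 m_npr; first lia.
    by rewrite expn1 primes_pr in m_npr.
  exact: Sr_prime_power_ge (primes_pr q q_in) (primes_gt_r q q_in).
have q_in : q \in primes m by rewrite primes_m mem_head.
have q'_in : q' \in primes m by rewrite primes_m !inE eqxx orbT.
have lt_qq' : q < q' by case/andP: sorted_m.
have le_q1q := q1_min (primes_pr q q_in) (primes_gt_r q q_in).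
have le_q2q' := q2_min (primes_pr q' q'_in) (leq_ltn_trans le_q1q lt_qq').
apply: leq_trans (Sr_ge_two_primes Sr_gt0 q_in q'_in (negbT (ltn_eqF lt_qq'))).
by apply: leq_mul; lia.
Qed.

Lemma inF_of_lt_bound p : prime p -> r < p < (q1 - r) * (q2 - r) + r -> inF r p.
Proof.
move=> p_pr /andP[lt_rp lt_p_bound].
split; first by split; [exact: prime_gt0 | rewrite Sr_prime //; lia].
move=> m m_inB lt_pm; rewrite Sr_prime //.
have [m_pr|m_npr] := boolP (prime m); first by rewrite Sr_prime //; lia.
by have := Sr_ge_bound m_inB (ltn_trans (prime_gt1 p_pr) lt_pm) m_npr; lia.
Qed.

Lemma inB_mul_q1 t : prime t -> r < t -> q1 != t -> inB r (q1 * t).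
Proof.
move=> t_pr lt_rt neq_q1t; split; first by rewrite muln_gt0 !prime_gt0.
by rewrite Sr_mul_primes // muln_gt0; lia.
Qed.

Lemma exists_larger_Sr_le p : (q1 - r) * (q2 - r) + r <= p ->
  exists m, [/\ inB r m, p < m & Sr r m <= p - r].
Proof.
move=> le_bound_p; have neq_q1q2 : q1 != q2 by rewrite ltn_eqF.
have [lt_p_q1q2|le_q1q2_p] := ltnP p (q1 * q2).
  exists (q1 * q2); rewrite Sr_mul_primes //; split => //; last lia.
  by apply: inB_mul_q1; lia.
set x := p %/ q1.
have le_q2x : q2 <= x by rewrite leq_divRL ?prime_gt0 // mulnC.
have [|t t_pr /andP[lt_xt le_t2x]] := @bertrand x; first lia.
have neq_q1t : q1 != t by rewrite ltn_eqF //; lia.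
exists (q1 * t); rewrite Sr_mul_primes //; split.
- by apply: inB_mul_q1; lia.
- by apply: leq_trans (ltn_ceil p (prime_gt0 q1_pr)) _; rewrite mulnC leq_mul2l lt_xt orbT.
apply: leq_trans (mul_sub_le_sub r_gt0 lt_r_q1 q1_le_double _ le_t2x) _; first lia.
by have := leq_divM p q1; rewrite -/x; lia.
Qed.

Lemma lt_bound_of_inF p : prime p -> inF r p -> r < p < (q1 - r) * (q2 - r) + r.
Proof.
move=> p_pr [[_ Sp_gt0] p_min]; rewrite Sr_prime // in Sp_gt0 p_min.
apply/andP; split; first lia.
rewrite ltnNge; apply/negP => /exists_larger_Sr_le [m [m_inB lt_pm le_Sm]].
by have := p_min m m_inB lt_pm; lia.
Qed.

End PrimesInF.

Theorem theorem3p1 (p r : nat) : prime p -> 0 < r ->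
  (inF r p <-> r < p < (pr (b r).+1 - r) * (pr (b r).+2 - r) + r).
Proof.
move=> p_pr r_gt0.
have [q1_pr lt_r_q1 q1_min] := pr_b_succP r_gt0.
have [q2_pr lt_q1_q2 q2_min] := next_primeP (pr (b r).+1).
split; [exact: lt_bound_of_inF | exact: inF_of_lt_bound].
Qed.
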